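(* Let $X$ be a topological space. If \textsc{Alice} does not have a winning strategy in the game $\mathsf{BM}_\omega(X)$, then $X$ is a Baire space.
   Context: The game $\mathsf{BM}_\omega(X)$ on a topological space $X$ is played by \textsc{Alice} and \textsc{Bob} as follows. \textsc{Alice} plays a non-empty open set $A_0$; \textsc{Bob} plays a countable collection $\mathcal{B}_0$ of non-empty open subsets of $A_0$. In inning $n+1$, for each $B \in \mathcal{B}_n$ \textsc{Alice} plays a non-empty open set $A_B \subseteq B$; let $\mathcal{A}_{n+1}=\{A_B : B\in\mathcal{B}_n\}$; then \textsc{Bob} plays a countable collection $\mathcal{B}_{n+1}$ of non-empty open subsets of $\bigcup\mathcal{A}_{n+1}$. Put $B_n=\bigcup\mathcal{B}_n$. \textsc{Bob} wins the play if $\bigcap_{n\in\omega}B_n\neq\emptyset$; otherwise \textsc{Alice} wins. A Baire space is a space in which countable intersections of dense open sets are dense. *)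

From HB Require Import structures.
From mathcomp Require Import all_boot all_order all_algebra.
From mathcomp Require Import all_classical all_reals all_analysis.
Set Implicit Arguments. Unset Strict Implicit. Unset Printing Implicit Defensive.
Local Open Scope classical_set_scope.

Section BMomega.
Variable X : topologicalType.

Definition bob_move_ok (U : set X) (Bc : set (set X)) : Prop :=
  countable Bc /\ (forall B, Bc B -> [/\ open B, B !=set0 & B `<=` U]).

(* A strategy for Alice: her first move A_0, and, given the history of Bob's
   moves [:: B_0; ...; B_n] and some B in B_n, her answer A_B.  (Alice's own
   earlier moves are determined by the strategy and Bob's moves.) *)
Record alice_strategy := AliceStrategy {
  alice_first : set X;
  alice_reply : seq (set (set X)) -> set X -> set X }.

Definition bob_history (Bs : nat -> set (set X)) (n : nat) := mkseq Bs n.+1.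

Definition bob_region (s : alice_strategy) (Bs : nat -> set (set X)) (n : nat)
  : set X :=
  match n with
  | 0 => alice_first s
  | k.+1 => \bigcup_(B in Bs k) alice_reply s (bob_history Bs k) B
  end.

Definition bob_legal_at (s : alice_strategy) (Bs : nat -> set (set X)) n :=
  bob_move_ok (bob_region s Bs n) (Bs n).

Definition alice_legal (s : alice_strategy) : Prop :=
  open (alice_first s) /\ alice_first s !=set0 /\
  forall (Bs : nat -> set (set X)) (n : nat),
    (forall k, (k <= n)%N -> bob_legal_at s Bs k) ->
    forall B, Bs n B ->
      [/\ open (alice_reply s (bob_history Bs n) B),
          alice_reply s (bob_history Bs n) B !=set0 &
          alice_reply s (bob_history Bs n) B `<=` B].

Definition alice_winning (s : alice_strategy) : Prop :=
  alice_legal s /\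
  forall Bs : nat -> set (set X),
    (forall n, bob_legal_at s Bs n) ->
    \bigcap_n (\bigcup_(B in Bs n) B) = set0.

Definition alice_has_winning_strategy : Prop :=
  exists s : alice_strategy, alice_winning s.

Definition baire_space : Prop :=
  forall F : nat -> set X, (forall n, open (F n) /\ dense (F n)) ->
    dense (\bigcap_n F n).

End BMomega.

From mathcomp Require Import all_boot.
From mathcomp Require Import all_classical all_reals all_analysis.
Local Open Scope classical_set_scope.

(** If [\bigcap_n F n] misses a non-empty open set [U], Alice wins by opening
    with [U] and answering every [B] of inning [n] with [B `&` F n]: this is a
    legal move because [F n] is open and dense, and it forces every point
    surviving the play into [U] and into every [F n]. *)

Section IntersectionStrategy.
Context {X : topologicalType} (U : set X) (F : nat -> set X).

Definition intersection_strategy : alice_strategy X :=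
  AliceStrategy U (fun h B => B `&` F (size h).-1).

Lemma intersection_strategy_reply (Bs : nat -> set (set X)) n B :
  alice_reply intersection_strategy (bob_history Bs n) B = B `&` F n.
Proof. by rewrite /= size_map size_iota. Qed.

Lemma intersection_strategy_legal :
  open U -> U !=set0 -> (forall n, open (F n) /\ dense (F n)) ->
  alice_legal intersection_strategy.
Proof.
move=> oU U0 oF; split; [exact: oU | split; first exact: U0].
move=> Bs n legal B BsB; rewrite (intersection_strategy_reply Bs n B).
have [_ /(_ B BsB) [oB B0 _]] := legal n (leqnn n).
have [oFn dFn] := oF n.
by split; [exact: openI | exact: dFn | exact: subIsetl].
Qed.

Lemma intersection_strategy_outcome (Bs : nat -> set (set X)) :
  (forall n, bob_legal_at intersection_strategy Bs n) ->
  \bigcap_n (\bigcup_(B in Bs n) B) `<=` U `&` \bigcap_n F n.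
Proof.
move=> legal x survives; split.
  have [B BsB Bx] := survives 0%N Logic.I.
  by have [_ /(_ B BsB) [_ _ /(_ x Bx)]] := legal 0%N.
move=> n _; have [B BsB Bx] := survives n.+1 Logic.I.
have [_ /(_ B BsB) [_ _ /(_ x Bx) [B' _]]] := legal n.+1.
by rewrite intersection_strategy_reply => -[].
Qed.

Lemma intersection_strategy_winning :
  open U -> U !=set0 -> (forall n, open (F n) /\ dense (F n)) ->
  U `&` \bigcap_n F n = set0 -> alice_winning intersection_strategy.
Proof.
move=> oU U0 oF UF0; split; first exact: intersection_strategy_legal.
move=> Bs legal; rewrite -subset0 -UF0.
exact: intersection_strategy_outcome.
Qed.

End IntersectionStrategy.

Theorem proposition3p2 (X : topologicalType) :
  ~ alice_has_winning_strategy X -> baire_space X.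
Proof.
move=> noAlice F oF; apply: contrapT => /denseNE [U [[x [oU Ux]] UF0]].
apply: noAlice; exists (intersection_strategy U F).
by apply: (intersection_strategy_winning _ _ oU _ oF UF0); exists x.
Qed.
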